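(* Let $\Psi$ be a well-formed declarative context and $\tau$ a monotype. (i) If $\Psi\vdash A\le\tau$ then $\tau$ does not occur inside an arrow in $A$. (ii) If $\Psi\vdash\tau\le B$ then $\tau$ does not occur inside an arrow in $B$.
   Context: Types $A,B ::= 1\mid\alpha\mid\forall\alpha.A\mid A\to B$; monotypes $\tau ::= 1\mid\alpha\mid\tau\to\tau'$. Declarative contexts $\Psi ::= \cdot\mid\Psi,\alpha\mid\Psi,x:A$. Well-formedness $\Psi\vdash A$: all free type variables of $A$ are declared in $\Psi$. Declarative subtyping $\Psi\vdash A\le B$ is the least relation with: $\alpha\in\Psi\Rightarrow\Psi\vdash\alpha\le\alpha$; $\Psi\vdash1\le1$; ($\Psi\vdash B_1\le A_1$, $\Psi\vdash A_2\le B_2$) $\Rightarrow\Psi\vdash A_1\to A_2\le B_1\to B_2$; ($\Psi\vdash\sigma$ monotype, $\Psi\vdash[\sigma/\alpha]A\le B$) $\Rightarrow\Psi\vdash\forall\alpha.A\le B$; ($\Psi,\beta\vdash A\le B$) $\Rightarrow\Psi\vdash A\le\forall\beta.B$. $A$ is a subterm of $B$ if $A$ occurs syntactically in $B$ (including $A=B$). $A$ occurs inside an arrow in $B$ iff there exist $B_1,B_2$ such that $B_1\to B_2$ is a subterm of $B$ and $A$ is a subterm of $B_1$ or of $B_2$. *)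

From Stdlib Require Import List Arith.
Import ListNotations.

Inductive typ : Type :=
| TUnit : typ
| TVar : nat -> typ
| TForall : nat -> typ -> typ
| TArr : typ -> typ -> typ.

Fixpoint is_mono (A : typ) : Prop :=
  match A with
  | TUnit => True
  | TVar _ => True
  | TForall _ _ => False
  | TArr A1 A2 => is_mono A1 /\ is_mono A2
  end.

Fixpoint ftv (A : typ) : list nat :=
  match A with
  | TUnit => []
  | TVar a => [a]
  | TForall b B => filter (fun x => negb (Nat.eqb x b)) (ftv B)
  | TArr A1 A2 => ftv A1 ++ ftv A2
  end.

Definition fresh (l : list nat) : nat := S (list_max l).

(* capture-avoiding simultaneous substitution; the bound variable is
   renamed (to a fresh name) only when it would capture *)
Fixpoint ssubst (env : nat -> typ) (A : typ) : typ :=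
  match A with
  | TUnit => TUnit
  | TVar a => env a
  | TForall b B =>
      let avoid := flat_map (fun x => if Nat.eqb x b then [] else ftv (env x)) (ftv B) in
      let z := if existsb (Nat.eqb b) avoid then fresh avoid else b in
      TForall z (ssubst (fun x => if Nat.eqb x b then TVar z else env x) B)
  | TArr A1 A2 => TArr (ssubst env A1) (ssubst env A2)
  end.

Definition subst (s : typ) (a : nat) (A : typ) : typ :=
  ssubst (fun x => if Nat.eqb x a then s else TVar x) A.

(* declarative contexts; the head of the list is the most recent entry *)
Inductive entry : Type :=
| ETVar : nat -> entry
| EVar : nat -> typ -> entry.

Definition ctx := list entry.

Fixpoint ctx_tvars (G : ctx) : list nat :=
  match G with
  | [] => []
  | ETVar a :: G' => a :: ctx_tvars G'
  | EVar _ _ :: G' => ctx_tvars G'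
  end.

Fixpoint ctx_vars (G : ctx) : list nat :=
  match G with
  | [] => []
  | ETVar _ :: G' => ctx_vars G'
  | EVar x _ :: G' => x :: ctx_vars G'
  end.

Definition wf_typ (G : ctx) (A : typ) : Prop :=
  forall a, In a (ftv A) -> In a (ctx_tvars G).

Inductive wf_ctx : ctx -> Prop :=
| wf_nil : wf_ctx []
| wf_tvar : forall G a, wf_ctx G -> ~ In a (ctx_tvars G) -> wf_ctx (ETVar a :: G)
| wf_var : forall G x A, wf_ctx G -> ~ In x (ctx_vars G) -> wf_typ G A ->
    wf_ctx (EVar x A :: G).

Inductive sub : ctx -> typ -> typ -> Prop :=
| sub_var : forall G a, In a (ctx_tvars G) -> sub G (TVar a) (TVar a)
| sub_unit : forall G, sub G TUnit TUnit
| sub_arr : forall G A1 A2 B1 B2,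
    sub G B1 A1 -> sub G A2 B2 -> sub G (TArr A1 A2) (TArr B1 B2)
| sub_forallL : forall G a A B s,
    wf_typ G s -> is_mono s -> sub G (subst s a A) B -> sub G (TForall a A) B
| sub_forallR : forall G A b B,
    sub (ETVar b :: G) A B -> sub G A (TForall b B).

Inductive subterm (A : typ) : typ -> Prop :=
| st_refl : subterm A A
| st_forall : forall b B, subterm A B -> subterm A (TForall b B)
| st_arrL : forall B1 B2, subterm A B1 -> subterm A (TArr B1 B2)
| st_arrR : forall B1 B2, subterm A B2 -> subterm A (TArr B1 B2).

Definition occurs_inside_arrow (A B : typ) : Prop :=
  exists B1 B2, subterm (TArr B1 B2) B /\ (subterm A B1 \/ subterm A B2).

(* Count the leaves (1 and type variables) of a type, ignoring quantifiers,
   and let [max_arg_leaves A] be the number of leaves of the larger side of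
   the outermost arrow of [A]; every type occurring inside an arrow in [A]
   has at most that many leaves, which is strictly fewer than [A] has.
   Both measures can only grow under substitution, so along a derivation of
   [A <= tau] or [tau <= B] with [tau] a monotype they are bounded by those
   of [tau] (quantifiers appear only on the polymorphic side).  Hence a copy
   of [tau] inside an arrow would have fewer leaves than [tau] itself. *)

From Stdlib Require Import List Arith Lia.

Fixpoint leaves (A : typ) : nat :=
  match A with
  | TUnit | TVar _ => 1
  | TForall _ B => leaves B
  | TArr A1 A2 => leaves A1 + leaves A2
  end.

Fixpoint max_arg_leaves (A : typ) : nat :=
  match A with
  | TUnit | TVar _ => 0
  | TForall _ B => max_arg_leaves B
  | TArr A1 A2 => Nat.max (leaves A1) (leaves A2)
  end.

Lemma leaves_pos (A : typ) : 1 <= leaves A.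
Proof. induction A; simpl; lia. Qed.

Lemma max_arg_leaves_lt (A : typ) : max_arg_leaves A < leaves A.
Proof.
  induction A as [| | |A1 _ A2 _]; simpl; auto.
  pose proof (leaves_pos A1); pose proof (leaves_pos A2); lia.
Qed.

Lemma leaves_subterm (S A : typ) : subterm S A -> leaves S <= leaves A.
Proof. induction 1; simpl; lia. Qed.

Lemma max_arg_leaves_subterm_arr (A B1 B2 : typ) :
  subterm (TArr B1 B2) A -> Nat.max (leaves B1) (leaves B2) <= max_arg_leaves A.
Proof.
  remember (TArr B1 B2) as B eqn:EB; induction 1 as [|? ? _ IH|A1 A2 HA1 _|A1 A2 HA2 _];
    subst; simpl; auto.
  - apply leaves_subterm in HA1; simpl in HA1.
    pose proof (leaves_pos B1); pose proof (leaves_pos B2); lia.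
  - apply leaves_subterm in HA2; simpl in HA2.
    pose proof (leaves_pos B1); pose proof (leaves_pos B2); lia.
Qed.

Lemma leaves_occurs_inside_arrow (S A : typ) :
  occurs_inside_arrow S A -> leaves S <= max_arg_leaves A.
Proof.
  intros (B1 & B2 & HB & [HS | HS]);
    apply max_arg_leaves_subterm_arr in HB; apply leaves_subterm in HS; lia.
Qed.

Lemma leaves_ssubst (env : nat -> typ) (A : typ) : leaves A <= leaves (ssubst env A).
Proof.
  revert env; induction A as [|a|b B IH|A1 IH1 A2 IH2]; intros env; simpl; auto.
  - apply leaves_pos.
  - specialize (IH1 env); specialize (IH2 env); lia.
Qed.

Lemma max_arg_leaves_ssubst (env : nat -> typ) (A : typ) :
  max_arg_leaves A <= max_arg_leaves (ssubst env A).
Proof.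
  revert env; induction A as [|a|b B IH|A1 _ A2 _]; intros env; simpl; auto with arith.
  pose proof (leaves_ssubst env A1); pose proof (leaves_ssubst env A2); lia.
Qed.

Definition dominated (A B : typ) : Prop :=
  leaves A <= leaves B /\ max_arg_leaves A <= max_arg_leaves B.

Lemma dominated_refl (A : typ) : dominated A A.
Proof. split; auto. Qed.

Lemma dominated_arr (A1 A2 B1 B2 : typ) :
  dominated A1 B1 -> dominated A2 B2 -> dominated (TArr A1 A2) (TArr B1 B2).
Proof. unfold dominated; simpl; lia. Qed.

Lemma dominated_subst (s : typ) (a : nat) (A B : typ) :
  dominated (subst s a A) B -> dominated (TForall a A) B.
Proof.
  unfold dominated, subst; simpl; intros [Hl Hm]; split.
  - eapply Nat.le_trans; [apply leaves_ssubst | exact Hl].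
  - eapply Nat.le_trans; [apply max_arg_leaves_ssubst | exact Hm].
Qed.

Lemma sub_dominated (G : ctx) (A B : typ) : sub G A B ->
  (is_mono B -> dominated A B) /\ (is_mono A -> dominated B A).
Proof.
  induction 1 as [| |G A1 A2 B1 B2 _ IH1 _ IH2|G a A B s _ _ _ IH|G A b B _ IH];
    simpl.
  - split; intros; apply dominated_refl.
  - split; intros; apply dominated_refl.
  - split; intros [Hm1 Hm2]; apply dominated_arr;
      [apply IH1 | apply IH2 | apply IH1 | apply IH2]; assumption.
  - split; [|tauto]. intros Hm. apply (dominated_subst s), IH, Hm.
  - split; [tauto|]. intros Hm. apply IH, Hm.
Qed.

Lemma not_occurs_inside_arrow_dominated (tau A : typ) :
  dominated A tau -> ~ occurs_inside_arrow tau A.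
Proof.
  intros [_ Hm] Hocc.
  pose proof (leaves_occurs_inside_arrow _ _ Hocc).
  pose proof (max_arg_leaves_lt tau); lia.
Qed.

Theorem mainTheorem14 (G : ctx) (tau : typ) :
  wf_ctx G -> is_mono tau ->
  (forall A : typ, sub G A tau -> ~ occurs_inside_arrow tau A) /\
  (forall B : typ, sub G tau B -> ~ occurs_inside_arrow tau B).
Proof.
  intros _ Hmono; split.
  - intros A HA. apply not_occurs_inside_arrow_dominated, (sub_dominated _ _ _ HA), Hmono.
  - intros B HB. apply not_occurs_inside_arrow_dominated, (sub_dominated _ _ _ HB), Hmono.
Qed.
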